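(* Let $R$ be a ring. The following are equivalent: (i) $R$ is nil-clean; (ii) the upper triangular matrix ring ${\rm T}_n(R)$ is weakly nil-clean for all $n\in\mathbb{N}$; (iii) ${\rm T}_n(R)$ is weakly nil-clean for some $n\ge 3$; (iv) ${\rm T}_n(R)$ is GWNC for some $n\ge 3$.
   Context: All rings are associative with identity. For a ring $S$, $U(S)$, ${\rm Nil}(S)$, ${\rm Id}(S)$ denote units, nilpotents, idempotents. $S$ is GWNC if every $a\in S\setminus U(S)$ can be written as $a=q+e$ or $a=q-e$ with $q\in{\rm Nil}(S)$, $e\in{\rm Id}(S)$. $S$ is weakly nil-clean if for every $a\in S$ there is $e\in{\rm Id}(S)$ with $a-e$ or $a+e$ nilpotent; $S$ is nil-clean if every element is a sum of an idempotent and a nilpotent. ${\rm T}_n(R)$ is the ring of $n\times n$ upper triangular matrices over $R$. *)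

From HB Require Import structures.
From mathcomp Require Import all_boot all_order all_algebra.
Set Implicit Arguments. Unset Strict Implicit. Unset Printing Implicit Defensive.
Import GRing.Theory.
Local Open Scope ring_scope.

(* Ring-theoretic notions relative to a subring of an ambient ring A, given as
   a predicate S (the subring's carrier). *)
Section Notions.
Variable A : pzRingType.

Definition nilp (x : A) : Prop := exists k : nat, x ^+ k = 0.
Definition idemp (x : A) : Prop := x * x = x.

Definition unit_in (S : pred A) (x : A) : Prop :=
  exists y, S y /\ x * y = 1 /\ y * x = 1.

Definition nil_clean_in (S : pred A) : Prop :=
  forall a, S a -> exists e q, [/\ S e, S q, idemp e, nilp q & a = e + q].

Definition weakly_nil_clean_in (S : pred A) : Prop :=
  forall a, S a -> exists e, [/\ S e, idemp e & nilp (a - e) \/ nilp (a + e)].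

Definition GWNC_in (S : pred A) : Prop :=
  forall a, S a -> ~ unit_in S a ->
    exists q e, [/\ S q, S e, nilp q, idemp e & a = q + e \/ a = q - e].
End Notions.

Definition nil_clean (R : pzRingType) : Prop := nil_clean_in (@predT R).

Definition upper_tri (R : pzRingType) (n : nat) : pred 'M[R]_n :=
  fun M => [forall i : 'I_n, forall j : 'I_n, (j < i)%N ==> (M i j == 0)].
Arguments upper_tri R n M : clear implicits.

(* On upper triangular matrices, taking the (i, i) entry is multiplicative,
   and a matrix whose diagonal entries are nilpotent is itself nilpotent.
   Hence nil-clean decompositions of the diagonal entries assemble into one of
   the matrix, and conversely a decomposition of a matrix of T_n(R) restricts
   to each diagonal entry. *)
From Pilot Require Import Defs.
From HB Require Import structures.
From mathcomp Require Import all_boot all_order all_algebra.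
Set Implicit Arguments. Unset Strict Implicit. Unset Printing Implicit Defensive.
Import GRing.Theory.
Local Open Scope ring_scope.

Section UpperTriangular.
Variables (R : pzRingType) (n : nat).
Implicit Types A B : 'M[R]_n.

Lemma upper_triP A :
  reflect (forall i j : 'I_n, (j < i)%N -> A i j = 0) (upper_tri R n A).
Proof.
apply: (iffP forallP) => [uA i j ltji | uA i].
  by have /forallP/(_ j)/implyP/(_ ltji)/eqP := uA i.
by apply/forallP => j; apply/implyP => ltji; rewrite uA.
Qed.

Lemma upper_tri_diag_mx (d : 'rV[R]_n) : upper_tri R n (diag_mx d).
Proof.
apply/upper_triP => i j ltji; rewrite mxE; case: eqP => // eqij.
by rewrite eqij ltnn in ltji.
Qed.

Lemma upper_tri_subring_closed : subring_closed (upper_tri R n).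
Proof.
split; first by rewrite -[1]diag_const_mx; apply: upper_tri_diag_mx.
  move=> A B /upper_triP uA /upper_triP uB; apply/upper_triP => i j ltji.
  by rewrite !mxE uA // uB // subr0.
move=> A B /upper_triP uA /upper_triP uB; apply/upper_triP => i j ltji.
rewrite -mulmxE mxE big1 // => k _.
have [ltki | leik] := ltnP k i; first by rewrite uA ?mul0r.
by rewrite uB ?mulr0 // (leq_trans ltji leik).
Qed.

HB.instance Definition _ :=
  GRing.isSubringClosed.Build _ (upper_tri R n) upper_tri_subring_closed.

Lemma mul_upper_tri_diag A B i : upper_tri R n A -> upper_tri R n B ->
  (A * B) i i = A i i * B i i.
Proof.
move=> /upper_triP uA /upper_triP uB.
rewrite -mulmxE mxE (bigD1 i) //= big1 ?addr0 // => k /negPf neki.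
have [ltki | ltik | eqki] := ltngtP k i; first by rewrite uA ?mul0r.
  by rewrite (uB k i) ?mulr0.
by rewrite (val_inj eqki) eqxx in neki.
Qed.

Lemma exp_upper_tri_diag A m i : upper_tri R n A -> (A ^+ m) i i = A i i ^+ m.
Proof.
move=> uA; elim: m => [|m IHm]; first by rewrite !expr0 mxE eqxx.
by rewrite !exprSr mul_upper_tri_diag ?IHm //; apply: rpredX.
Qed.

Lemma exp_strictly_upper_tri A m (i j : 'I_n) :
  upper_tri R n A -> (forall k, A k k = 0) -> (j < i + m)%N -> (A ^+ m) i j = 0.
Proof.
move=> /upper_triP uA A0; elim: m i j => [|m IHm] i j ltj.
  by rewrite expr0 mxE; case: eqP => // eqij; rewrite eqij addn0 ltnn in ltj.
rewrite exprSr -mulmxE mxE big1 // => k _.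
have [ltk | lek] := ltnP k (i + m); first by rewrite IHm ?mul0r.
have [ltjk | ltkj | eqjk] := ltngtP j k; first by rewrite uA ?mulr0.
  by move: ltj; rewrite addnS ltnS => /leq_trans/(_ lek); rewrite leqNgt ltkj.
by rewrite (val_inj eqjk) A0 mulr0.
Qed.

Lemma upper_tri_nilp A : upper_tri R n A ->
  (forall i, Defs.nilp (A i i)) -> Defs.nilp A.
Proof.
move=> uA /fin_all_exists [k Ak0].
pose K := (\max_i k i)%N.
have AK0 i : (A ^+ K) i i = 0.
  by rewrite exp_upper_tri_diag // /K -(subnKC (leq_bigmax i)) exprD Ak0 mul0r.
exists (K * n)%N; rewrite exprM; apply/matrixP => i j.
rewrite mxE exp_strictly_upper_tri ?(leq_trans (ltn_ord j) (leq_addl _ _)) //.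
exact: rpredX.
Qed.

Lemma nilp_upper_tri_diag A i : upper_tri R n A -> Defs.nilp A -> Defs.nilp (A i i).
Proof. by move=> uA [k Ak0]; exists k; rewrite -exp_upper_tri_diag // Ak0 mxE. Qed.

Lemma idemp_upper_tri_diag A i : upper_tri R n A -> idemp A -> idemp (A i i).
Proof. by move=> uA idA; rewrite /idemp -mul_upper_tri_diag // idA. Qed.

Lemma unit_upper_tri_diag A i : upper_tri R n A ->
  unit_in (upper_tri R n) A -> unit_in predT (A i i).
Proof.
move=> uA [B [uB [AB1 BA1]]]; exists (B i i).
by rewrite -!mul_upper_tri_diag // AB1 BA1 mxE eqxx.
Qed.

Lemma nil_clean_upper_tri : nil_clean R -> nil_clean_in (upper_tri R n).
Proof.
move=> ncR A uA.
have /fin_all_exists [e /all_and2 [ide nilAe]] :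
    forall i, exists e, idemp e /\ Defs.nilp (A i i - e).
  move=> i; have [e [q [_ _ ide nilq ->]]] := ncR (A i i) isT.
  by exists e; rewrite addrC addKr.
pose E := diag_mx (\row_i e i).
have uAE : upper_tri R n (A - E) by apply: rpredB => //; apply: upper_tri_diag_mx.
exists E, (A - E); split => //; first exact: upper_tri_diag_mx.
- rewrite /idemp -mulmxE mulmx_diag; congr diag_mx.
  by apply/rowP => j; rewrite !mxE ide.
- by apply: upper_tri_nilp => // i; rewrite !mxE eqxx mulr1n.
- by rewrite addrC subrK.
Qed.

End UpperTriangular.

Lemma nilpN (A : pzRingType) (x : A) : Defs.nilp x -> Defs.nilp (- x).
Proof. by move=> [k xk0]; exists k; rewrite exprNn xk0 mulr0. Qed.

Lemma nil_clean_in_weakly_nil_clean_in (A : pzRingType) (S : pred A) :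
  nil_clean_in S -> weakly_nil_clean_in S.
Proof.
move=> ncS a Sa; have [e [q [Se _ ide nilq ->]]] := ncS a Sa.
by exists e; split=> //; left; rewrite addrC addKr.
Qed.

Lemma weakly_nil_clean_GWNC_in (A : pzRingType) (S : zmodClosed A) :
  weakly_nil_clean_in (S : {pred A}) -> GWNC_in (S : {pred A}).
Proof.
move=> wncS a Sa _; have [e [Se ide [nilae | nilae]]] := wncS a Sa.
  by exists (a - e), e; split=> //; [exact: rpredB | left; rewrite subrK].
by exists (a + e), e; split=> //; [exact: rpredD | right; rewrite addrK].
Qed.

(* The witness is [diag(a, -a, 0, ..., 0)]: its zero third entry makes it a
   non-unit, and reading [q + e] at entry 0, or [q - e] at entry 1, gives a
   nil-clean decomposition of [a]. *)
Lemma GWNC_upper_tri_nil_clean (R : pzRingType) n :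
  (3 <= n)%N -> GWNC_in (upper_tri R n) -> nil_clean R.
Proof.
move=> n_ge3 gwnc a _.
have [oner0 | oner_neq0] := eqVneq (1 : R) 0.
  exists 0, 0; split => //; first by rewrite /idemp mul0r.
    by exists 1%N; rewrite expr1.
  by rewrite -[a]mul1r oner0 mul0r addr0.
pose i0 : 'I_n := Ordinal (ltnW (ltnW n_ge3)).
pose i1 : 'I_n := Ordinal (ltnW n_ge3).
pose i2 : 'I_n := Ordinal n_ge3.
pose d (i : 'I_n) := if val i == 0%N then a else if val i == 1%N then - a else 0.
pose D := diag_mx (\row_i d i).
have Dii i : D i i = d i by rewrite !mxE eqxx mulr1n.
have uD : upper_tri R n D := upper_tri_diag_mx _.
have D_nonunit : ~ unit_in (upper_tri R n) D.
  move=> /(unit_upper_tri_diag i2 uD) [b [_ [+ _]]].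
  by rewrite Dii mul0r => /esym/eqP; rewrite (negPf oner_neq0).
have [Q [E [uQ uE nilQ idE DQE]]] := gwnc D uD D_nonunit.
have nilQi i := nilp_upper_tri_diag i uQ nilQ.
have idEi i := idemp_upper_tri_diag i uE idE.
case: DQE => DQE.
  exists (E i0 i0), (Q i0 i0); split => //.
  by rewrite addrC -[a]/(d i0) -Dii DQE mxE.
exists (E i1 i1), (- Q i1 i1); split => //; first exact: nilpN.
by rewrite -[a]opprK -[- a]/(d i1) -Dii DQE !mxE opprB.
Qed.

Theorem proposition2p26 (R : pzRingType) :
  [<-> nil_clean R;
       forall n : nat, weakly_nil_clean_in (upper_tri R n);
       exists n : nat, (3 <= n)%N /\ weakly_nil_clean_in (upper_tri R n);
       exists n : nat, (3 <= n)%N /\ GWNC_in (upper_tri R n)].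
Proof.
tfae.
- by move=> ncR n; apply/nil_clean_in_weakly_nil_clean_in/nil_clean_upper_tri.
- by move=> wncT; exists 3%N.
- by move=> [n [n_ge3 wncT]]; exists n; split=> //; apply: weakly_nil_clean_GWNC_in.
- by move=> [n [n_ge3 gwncT]]; apply: GWNC_upper_tri_nil_clean gwncT.
Qed.
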